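(* For $i\ne j\in\{1,2\}$ let $a_i=\exp\left(-\frac{\gamma_i}{p_i\ell(r_{ii})}\right)$ and $b_i=\exp\left(-\frac{\gamma_i}{p_i\ell(r_{ii})}\right)\left[1+\gamma_i\frac{p_j\ell(r_{ji})}{p_i\ell(r_{ii})}\right]^{-1}$, with all $p_i,\gamma_i,\ell(r_{ab})>0$. Then $\frac{b_1}{a_1}+\frac{b_2}{a_2}\ge 1$ (and hence the stability region $\mathcal{R}^{\mathrm{IAN}}=\mathcal{R}_1\cup\mathcal{R}_2$ is convex) if and only if $$\gamma_1\gamma_2\le\frac{\ell(r_{11})\ell(r_{22})}{\ell(r_{12})\ell(r_{21})}.$$
   Context: Two-user interference channel with Rayleigh fading (unit-mean exponential channel power gains, independent), unit noise power, transmit powers $p_i$, SINR thresholds $\gamma_i$, distances $r_{ab}$ from transmitter $S_a$ to receiver $D_b$, and non-increasing pathloss $\ell$. $a_i$ is the probability that $D_i$ decodes $S_i$ when only $S_i$ transmits; $b_i$ is that probability when both transmit and both receivers treat interference as noise (IAN). The stability region is $\mathcal{R}_1\cup\mathcal{R}_2$ with $\mathcal{R}_1=\{(\lambda_1,\lambda_2):\lambda_1/a_1+(a_1-b_1)\lambda_2/(a_1b_2)<1,\ \lambda_2<b_2\}$ and $\mathcal{R}_2=\{(\lambda_1,\lambda_2):\lambda_2/a_2+(a_2-b_2)\lambda_1/(a_2b_1)<1,\ \lambda_1<b_1\}$. *)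

From Stdlib Require Import Reals.
Open Scope R_scope.

(* a_i: success probability of link i when only S_i transmits (Rayleigh fading,
   unit noise): exp(-gamma_i / (p_i * l(r_ii))). *)
Definition succ_alone (gam p lii : R) : R := exp (- (gam / (p * lii))).

(* b_i: success probability of link i when both transmit, interference as noise:
   exp(-gamma_i/(p_i l(r_ii))) * [1 + gamma_i p_j l(r_ji) / (p_i l(r_ii))]^{-1}. *)
Definition succ_both (gam p lii pj lji : R) : R :=
  exp (- (gam / (p * lii))) * / (1 + gam * (pj * lji) / (p * lii)).

(* Dividing out the common exponential factor gives b_i / a_i = 1 / (1 + x_i),
   where x_i = gamma_i p_j l(r_ji) / (p_i l(r_ii)) is the normalized interference
   at D_i.  For x, y > -1 one has 1/(1+x) + 1/(1+y) >= 1 iff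
   2 + x + y >= (1+x)(1+y), i.e. iff x y <= 1; and in
   x_1 x_2 = gamma_1 gamma_2 l(r_12) l(r_21) / (l(r_11) l(r_22)) the powers cancel. *)

From Stdlib Require Import Reals Lra Psatz.
Open Scope R_scope.

Lemma succ_both_div_succ_alone (g p lii pj lji : R) :
  succ_both g p lii pj lji / succ_alone g p lii = / (1 + g * (pj * lji) / (p * lii)).
Proof.
  unfold succ_both, succ_alone.
  assert (he := exp_pos (- (g / (p * lii)))).
  unfold Rdiv at 1.
  rewrite Rmult_comm, <- Rmult_assoc, Rinv_l by lra.
  apply Rmult_1_l.
Qed.

Lemma inv_1p_add_inv_1p_ge1_iff (x y : R) :
  -1 < x -> -1 < y -> / (1 + x) + / (1 + y) >= 1 <-> x * y <= 1.
Proof.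
  intros hx hy.
  assert (hd : 0 < (1 + x) * (1 + y)) by nra.
  replace (/ (1 + x) + / (1 + y)) with ((2 + x + y) / ((1 + x) * (1 + y)))
    by (field; lra).
  split; intro H.
  - apply Rge_le, Rmult_le_compat_r with (r := (1 + x) * (1 + y)) in H; [|lra].
    replace ((2 + x + y) / ((1 + x) * (1 + y)) * ((1 + x) * (1 + y))) with (2 + x + y)
      in H by (field; lra).
    nra.
  - apply Rle_ge, Rmult_le_reg_r with ((1 + x) * (1 + y)); [exact hd|].
    replace ((2 + x + y) / ((1 + x) * (1 + y)) * ((1 + x) * (1 + y))) with (2 + x + y)
      by (field; lra).
    nra.
Qed.

Lemma mul_div_le1_iff (g a b : R) : 0 < a -> 0 < b -> g * a / b <= 1 <-> g <= b / a.
Proof.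
  intros ha hb.
  assert (hl : g * a / b <= 1 <-> g * a <= b).
  { split; intro H.
    - apply Rmult_le_compat_r with (r := b) in H; [|lra].
      replace (g * a / b * b) with (g * a) in H by (field; lra). lra.
    - apply Rmult_le_reg_r with b; [exact hb|].
      replace (g * a / b * b) with (g * a) by (field; lra). lra. }
  assert (hr : g <= b / a <-> g * a <= b).
  { split; intro H.
    - apply Rmult_le_compat_r with (r := a) in H; [|lra].
      replace (b / a * a) with b in H by (field; lra). exact H.
    - apply Rmult_le_reg_r with a; [exact ha|].
      replace (b / a * a) with b by (field; lra). exact H. }
  rewrite hl, hr. reflexivity.
Qed.

Theorem mainTheorem6 (l : R -> R) (r11 r12 r21 r22 p1 p2 g1 g2 : R)
  (l_noninc : forall x y, x <= y -> l y <= l x)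
  (hp1 : 0 < p1) (hp2 : 0 < p2) (hg1 : 0 < g1) (hg2 : 0 < g2)
  (hl11 : 0 < l r11) (hl12 : 0 < l r12) (hl21 : 0 < l r21) (hl22 : 0 < l r22) :
  let a1 := succ_alone g1 p1 (l r11) in
  let a2 := succ_alone g2 p2 (l r22) in
  let b1 := succ_both g1 p1 (l r11) p2 (l r21) in
  let b2 := succ_both g2 p2 (l r22) p1 (l r12) in
  b1 / a1 + b2 / a2 >= 1 <->
  g1 * g2 <= (l r11 * l r22) / (l r12 * l r21).
Proof.
  intros a1 a2 b1 b2; subst a1 a2 b1 b2.
  rewrite !succ_both_div_succ_alone.
  assert (hx : 0 < g1 * (p2 * l r21) / (p1 * l r11)).
  { apply Rdiv_lt_0_compat; apply Rmult_lt_0_compat; nra. }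
  assert (hy : 0 < g2 * (p1 * l r12) / (p2 * l r22)).
  { apply Rdiv_lt_0_compat; apply Rmult_lt_0_compat; nra. }
  rewrite inv_1p_add_inv_1p_ge1_iff by lra.
  rewrite <- mul_div_le1_iff by (apply Rmult_lt_0_compat; lra).
  replace (g1 * (p2 * l r21) / (p1 * l r11) * (g2 * (p1 * l r12) / (p2 * l r22)))
    with (g1 * g2 * (l r12 * l r21) / (l r11 * l r22)) by (field; lra).
  reflexivity.
Qed.
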